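(* In the category $\mathbf{SL}$ with the basic morphisms listed below, the number of facets of each object $A$ is at most $\left(c^{\lim}_{\mathbf{SL},\mathcal{A}}(A)\right)^2$, where $c^{\lim}_{\mathbf{SL},\mathcal{A}}(A)$ is the limit complexity of $A$.
   Context: $\mathbf{SL}$ is the category whose objects are semi-linear sets $A\subset\mathbb{R}^n$ (for varying $n\ge0$) and whose morphisms $(A\subset\mathbb{R}^n)\to(B\subset\mathbb{R}^m)$ are maps $A\to B$ that are restrictions of affine maps $\mathbb{R}^n\to\mathbb{R}^m$. The basic morphisms $\mathcal{A}$ (each of unit cost) are: multiplication by $c$, $\mathbb{R}\xrightarrow{c}\mathbb{R}$, for each $c\in\mathbb{R}$; addition $\mathbb{R}^2\xrightarrow{+}\mathbb{R}$; the inclusion $[0,\infty)\hookrightarrow\mathbb{R}$; and $\mathbb{R}\to 0$ (map to a point). A diagram of finite shape $I=(V,E,s,t)$ assigns objects to vertices and morphisms $D(e):D(s(e))\to D(t(e))$ to edges (no commutativity required); subdiagrams are restrictions to full subgraphs. A limit computation is a sequence of diagrams $(D_0,\dots,D_s)$ where $D_0$ consists only of basic morphisms and each $D_i$ ($i\ge1$) is obtained from $D_{i-1}$ by choosing a full subgraph $J_i$, adding a new vertex $v_i$ carrying a limit of $D_{i-1}|_{J_i}$ with edges from $v_i$ to each vertex of $J_i$ carrying the limit cone morphisms, subject to constructivity: if $v_i$ lies in $J_j$ for some $j>i$ then $J_i\subseteq J_j$. It computes an object $A$ if an object isomorphic to $A$ appears in $D_s$; its cost is $s$ plus the number of edges of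 $D_0$. The limit complexity of $A$ is the minimum cost of a limit computation computing $A$ ($\infty$ if none). Objects computable this way are closed convex polyhedra, and facets are their codimension-one faces. *)

From HB Require Import structures.
From mathcomp Require Import all_boot all_order all_algebra.
From mathcomp Require Import classical_sets reals.
From Stdlib Require List.
Import Order.TTheory GRing.Theory Num.Theory.
Local Open Scope ring_scope.
Local Open Scope classical_set_scope.

Section SL.
Variable R : realType.

Definition lin (n : nat) (a x : 'cV[R]_n) : R := (a^T *m x) 0 0.
Arguments lin {n}.

(** Semi-linear sets: the Boolean algebra generated by open half-spaces
    (real coefficients). The empty set is the half-space with a = 0, b = 0. *)
Inductive semilinear (n : nat) : set 'cV[R]_n -> Prop :=
| sl_half (a : 'cV[R]_n) (b : R) : semilinear n [set x | 0 < lin a x + b]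
| sl_compl (A : set 'cV[R]_n) : semilinear n A -> semilinear n (~` A)
| sl_union (A B : set 'cV[R]_n) :
    semilinear n A -> semilinear n B -> semilinear n (A `|` B).
Arguments semilinear {n}.

Record obj := Obj {
  odim : nat;
  oset : set 'cV[R]_odim;
  osemilin : semilinear oset }.
Arguments oset : clear implicits.

(** Morphisms of SL: maps A -> B which are restrictions of affine maps
    x |-> M x + b; two morphisms are equal iff they agree on A ([meq]). *)
Record mor (X Y : obj) := Mor {
  mM : 'M[R]_(odim Y, odim X);
  mb : 'cV[R]_(odim Y);
  mmaps : forall x, oset X x -> oset Y (mM *m x + mb) }.
Arguments mM {X Y}.
Arguments mb {X Y}.

Definition mapp (X Y : obj) (f : mor X Y) (x : 'cV[R]_(odim X)) : 'cV[R]_(odim Y) :=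
  mM f *m x + mb f.
Arguments mapp {X Y}.

Definition meq (X Y : obj) (f g : mor X Y) : Prop :=
  forall x, oset X x -> mapp f x = mapp g x.
Arguments meq {X Y}.

Definition iso (X Y : obj) : Prop :=
  exists (f : mor X Y) (g : mor Y X),
    (forall x, oset X x -> mapp g (mapp f x) = x) /\
    (forall y, oset Y y -> mapp f (mapp g y) = y).

(** k-th coordinate of a vector (0 if out of range). *)
Definition coord (n : nat) (v : 'cV[R]_n) (k : nat) : R :=
  if @insub nat (fun m => m < n)%N 'I_n k is Some i then v i 0 else 0.
Arguments coord {n}.

(** The basic morphisms A: multiplication by c on R, addition R^2 -> R,
    inclusion [0,oo) -> R, and R -> 0 (the point R^0). *)
Definition basic (X Y : obj) (f : mor X Y) : Prop :=
  [\/ (odim X = 1%N /\ oset X = setT /\ odim Y = 1%N /\ oset Y = setT /\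
       exists c : R, forall x, oset X x -> coord (mapp f x) 0 = c * coord x 0),
      (odim X = 2%N /\ oset X = setT /\ odim Y = 1%N /\ oset Y = setT /\
       forall x, oset X x -> coord (mapp f x) 0 = coord x 0 + coord x 1),
      (odim X = 1%N /\ oset X = [set x | 0 <= coord x 0] /\ odim Y = 1%N /\
       oset Y = setT /\ forall x, oset X x -> coord (mapp f x) 0 = coord x 0)
    | (odim X = 1%N /\ oset X = setT /\ odim Y = 0%N /\ oset Y = setT)].
Arguments basic {X Y}.

(** Default object (only used as a default for [nth]). *)
Definition obj0 : obj :=
  @Obj 0 (~` [set x | 0 < lin 0 x + 0]) (@sl_compl 0 _ (@sl_half 0 0 0)).

Definition vtx (V : seq obj) (i : nat) : obj := nth obj0 V i.

(** A limit computation (D_0, ..., D_s) is encoded by its final diagram D_s: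
    vertices are 0, ..., size V - 1 carrying the objects [vtx V i];
    vertices 0 .. n0-1 are those of D_0, and vertex n0 + t is the vertex
    v_(t+1) added at step t+1, with chosen full subgraph [J t].
    [E i j] is the list of (parallel) edges from i to j. *)
Record limcomp := LimComp {
  lc_n0 : nat;
  lc_V : seq obj;
  lc_E : forall i j : nat, seq (mor (vtx lc_V i) (vtx lc_V j));
  lc_J : nat -> pred nat }.

Definition is_limit_cone (V : seq obj)
    (E : forall i j : nat, seq (mor (vtx V i) (vtx V j)))
    (J : pred nat) (k : nat) : Prop :=
  (forall a b, J a -> J b -> forall e p q,
      List.In e (E a b) -> List.In p (E k a) -> List.In q (E k b) ->
      forall x, oset (vtx V k) x -> mapp e (mapp p x) = mapp q x) /\
  (forall (X : obj) (g : forall j, J j -> mor X (vtx V j)),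
      (forall a b (ha : J a) (hb : J b) e, List.In e (E a b) ->
         forall x, oset X x -> mapp e (mapp (g a ha) x) = mapp (g b hb) x) ->
      exists u : mor X (vtx V k),
        (forall j (hj : J j) p, List.In p (E k j) ->
           forall x, oset X x -> mapp p (mapp u x) = mapp (g j hj) x) /\
        (forall u' : mor X (vtx V k),
           (forall j (hj : J j) p, List.In p (E k j) ->
              forall x, oset X x -> mapp p (mapp u' x) = mapp (g j hj) x) ->
           meq u u')).

Definition lc_steps (C : limcomp) : nat := (size (lc_V C) - lc_n0 C)%N.

Definition is_limcomp (C : limcomp) : Prop :=
  let n0 := lc_n0 C in let V := lc_V C in let E := lc_E C in
  let J := lc_J C in
  (n0 <= size V)%N /\
  (forall i j, (size V <= i)%N \/ (size V <= j)%N -> E i j = [::]) /\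
  (forall i j, (i < n0)%N -> (n0 <= j)%N -> E i j = [::]) /\
  (forall i j, (i < n0)%N -> (j < n0)%N ->
      forall e, List.In e (E i j) -> basic e) /\
  (forall i, (i < n0)%N ->
      exists j, (j < n0)%N /\ (E i j <> [::] \/ E j i <> [::])) /\
  (forall t, (t < lc_steps C)%N ->
      (forall j, J t j -> (j < n0 + t)%N) /\
      (forall j, size (E (n0 + t) j) = nat_of_bool (J t j)) /\
      is_limit_cone V E (J t) (n0 + t)) /\
  (forall t t', (t < t')%N -> (t' < lc_steps C)%N -> J t' (n0 + t) ->
      forall j, J t j -> J t' j).

Definition lc_cost (C : limcomp) : nat :=
  (lc_steps C + \sum_(i < lc_n0 C) \sum_(j < lc_n0 C) size (lc_E C i j))%N.

Definition lc_computes (C : limcomp) (A : obj) : Prop :=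
  exists i, (i < size (lc_V C))%N /\ iso (vtx (lc_V C) i) A.

(** The limit complexity of A equals c (the minimum cost of a limit
    computation computing A). If no computation exists, the complexity is
    infinite and no such c exists. *)
Definition lim_complexity_is (A : obj) (c : nat) : Prop :=
  (exists C, is_limcomp C /\ lc_computes C A /\ lc_cost C = c) /\
  (forall C, is_limcomp C -> lc_computes C A -> (c <= lc_cost C)%N).

Definition aff_dim_ge (n : nat) (S : set 'cV[R]_n) (k : nat) : Prop :=
  exists (x0 : 'cV[R]_n) (X : 'M[R]_(k, n)),
    S x0 /\ (forall i, S (x0 + (row i X)^T)) /\ \rank X = k.
Arguments aff_dim_ge {n}.

Definition has_dim (n : nat) (S : set 'cV[R]_n) (d : int) : Prop :=
  (S = set0 /\ d = -1) \/
  (exists k : nat, d = k%:Z /\ aff_dim_ge S k /\ ~ aff_dim_ge S k.+1).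
Arguments has_dim {n}.

(** faces of a (closed convex polyhedral) set A: A ∩ {a.x = b} for a
    valid inequality a.x <= b (a = 0 allowed, giving A and the empty face) *)
Definition face (n : nat) (A F : set 'cV[R]_n) : Prop :=
  exists (a : 'cV[R]_n) (b : R),
    (forall x, A x -> lin a x <= b) /\ F = A `&` [set x | lin a x = b].
Arguments face {n}.

Definition facet (n : nat) (A F : set 'cV[R]_n) : Prop :=
  face A F /\ exists d : int, has_dim A d /\ has_dim F (d - 1).

End SL.

Arguments lin {R n}.
Arguments semilinear {R n}.
Arguments odim {R}.
Arguments oset {R}.
Arguments mM {R X Y}.
Arguments mb {R X Y}.
Arguments mapp {R X Y}.
Arguments meq {R X Y}.
Arguments iso {R}.
Arguments coord {R n}.
Arguments basic {R X Y}.
Arguments vtx {R}.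
Arguments is_limit_cone {R}.
Arguments lc_n0 {R}.
Arguments lc_V {R}.
Arguments lc_E {R}.
Arguments lc_J {R}.
Arguments lc_steps {R}.
Arguments is_limcomp {R}.
Arguments lc_cost {R}.
Arguments lc_computes {R}.
Arguments lim_complexity_is {R}.
Arguments aff_dim_ge {R n}.
Arguments has_dim {R n}.
Arguments face {R n}.
Arguments facet {R n}.

From HB Require Import structures.
From mathcomp Require Import all_boot all_order all_algebra.
From mathcomp Require Import classical_sets reals.
From Stdlib Require List.
From mathcomp Require Import zify lra boolp.
(* Imported after vector.v so that [coord] is the coordinate function of Defs. *)
From Pilot Require Import Defs.
Import Order.TTheory GRing.Theory Num.Theory.

(* Every object [D_k] of a limit computation is cut out of its affine hull by
   the inequalities [x_a >= 0], one for each vertex [a] of [D_0] carrying the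
   ray [0, oo), where [x_a] is the coordinate of the image of [x] at [a]. This
   holds for [D_0], and it propagates to a limit: a point of the affine hull of
   the limit lies in the limit as soon as its images under the legs of the cone
   lie in the objects of the subdiagram, and constructivity makes the legs of
   earlier limits factor through the new cone. A facet of a set cut out of its
   affine hull by finitely many inequalities is the zero set of one of them, so
   [A] has at most max(1, #rays) facets. Each ray vertex of [D_0] carries an
   edge and the cost is positive, so this is at most [c], hence at most [c^2]. *)

Set Implicit Arguments.
Unset Strict Implicit.
Unset Printing Implicit Defensive.

Local Open Scope ring_scope.
Local Open Scope classical_set_scope.

Lemma In_nth T (x0 : T) (s : seq T) i : (i < size s)%N -> List.In (nth x0 s i) s.
Proof. by elim: s i => [//|x s IH] [|i] /= hi; [left | right; apply: IH]. Qed.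

Lemma distinct_nth_inj T (x0 : T) (s : seq T) i j :
  (forall i j, (i < j)%N -> (j < size s)%N -> nth x0 s i <> nth x0 s j) ->
  (i < size s)%N -> (j < size s)%N -> nth x0 s i = nth x0 s j -> i = j.
Proof.
move=> dist hi hj e; case: (ltngtP i j) => // lt; first by case: (dist _ _ lt hj).
by case: (dist _ _ lt hi).
Qed.

Section AffineGeometry.
Variable R : realType.

Lemma linD n (a x y : 'cV[R]_n) : lin a (x + y) = lin a x + lin a y.
Proof. by rewrite /lin mulmxDr mxE. Qed.

Lemma linB n (a x y : 'cV[R]_n) : lin a (x - y) = lin a x - lin a y.
Proof. by rewrite /lin mulmxBr !mxE. Qed.

Lemma linZ n (a x : 'cV[R]_n) (c : R) : lin a (c *: x) = c * lin a x.
Proof. by rewrite /lin -scalemxAr mxE. Qed.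

Lemma lin_mulmx n m (a : 'cV[R]_n) (M : 'M[R]_(n, m)) x :
  lin a (M *m x) = lin (M^T *m a) x.
Proof. by rewrite /lin trmx_mul trmxK mulmxA. Qed.

Lemma lin_trmx n (a : 'cV[R]_n) (v : 'rV[R]_n) : lin a v^T = (v *m a) 0 0.
Proof. by rewrite /lin -trmx_mul mxE. Qed.

Lemma lin0 n (x : 'cV[R]_n) : lin 0 x = 0.
Proof. by rewrite /lin trmx0 mul0mx mxE. Qed.

Lemma linNl n (a x : 'cV[R]_n) : lin (- a) x = - lin a x.
Proof. by rewrite /lin linearN /= mulNmx mxE. Qed.

Lemma lin_sum n (a : 'cV[R]_n) I (r : seq I) (F : I -> 'cV[R]_n) :
  lin a (\sum_(i <- r) F i) = \sum_(i <- r) lin a (F i).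
Proof.
elim: r => [|x r IH]; first by rewrite !big_nil /lin mulmx0 mxE.
by rewrite !big_cons linD IH.
Qed.

Lemma lin_delta n (i : 'I_n) (x : 'cV[R]_n) : lin (delta_mx i 0) x = x i 0.
Proof. by rewrite /lin trmx_delta -rowE mxE. Qed.

Lemma coord_lin n (k : nat) : exists c : 'cV[R]_n, forall v, coord v k = lin c v.
Proof.
rewrite /coord; case: insubP => [i _ _|_].
  by exists (delta_mx i 0) => v; rewrite lin_delta.
by exists 0 => v; rewrite lin0.
Qed.

Definition affine_fun n (q : 'cV[R]_n -> R) : Prop :=
  exists c d, forall y, q y = lin c y + d.

Lemma affine_fun0 n : affine_fun (fun _ : 'cV[R]_n => 0).
Proof. by exists 0, 0 => y; rewrite lin0 addr0. Qed.

Lemma affine_fun_coord n (k : nat) : affine_fun (fun y : 'cV[R]_n => coord y k).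
Proof. by have [c Hc] := coord_lin n k; exists c, 0 => y; rewrite Hc addr0. Qed.

Lemma affine_fun_mapp (X Y : obj R) (f : mor R X Y) (q : 'cV[R]_(odim Y) -> R) :
  affine_fun q -> affine_fun (fun x => q (mapp f x)).
Proof.
case=> c [d Hq]; exists ((mM f)^T *m c), (lin c (mb f) + d) => y.
by rewrite Hq /mapp linD lin_mulmx addrA.
Qed.

Definition affine_hull n (S : set 'cV[R]_n) : set 'cV[R]_n :=
  [set y | exists r (pts : 'I_r -> 'cV[R]_n) (w : 'I_r -> R),
    (forall l, S (pts l)) /\ \sum_l w l = 1 /\ y = \sum_l w l *: pts l].

Lemma affine_hull_comb n (S : set 'cV[R]_n) r (pts : 'I_r -> 'cV[R]_n) (w : 'I_r -> R) :
  (forall l, S (pts l)) -> \sum_l w l = 1 -> affine_hull S (\sum_l w l *: pts l).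
Proof. by move=> Sp Hw; exists r, pts, w. Qed.

Lemma subset_affine_hull n (S : set 'cV[R]_n) : S `<=` affine_hull S.
Proof.
move=> y Sy; exists 1%N, (fun=> y), (fun=> 1); split=> //.
by rewrite big_ord1 scale1r big_ord1.
Qed.

Lemma affine_hullS n (S T : set 'cV[R]_n) : S `<=` T -> affine_hull S `<=` affine_hull T.
Proof. by move=> ST y [r [pts [w [Sp Hw]]]]; exists r, pts, w; split=> // l; apply: ST. Qed.

Lemma affine_hull_line n (S : set 'cV[R]_n) u v s :
  S u -> S v -> affine_hull S ((1 - s) *: u + s *: v).
Proof.
move=> Su Sv; exists 2%N, (fun l : 'I_2 => if l == ord0 then u else v),
  (fun l : 'I_2 => if l == ord0 then 1 - s else s).
split; first by move=> l; case: ifP.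
by rewrite !big_ord_recl !big_ord0 /= !addr0 subrK.
Qed.

Lemma affine_fun_comb n (q : 'cV[R]_n -> R) r (pts : 'I_r -> 'cV[R]_n) (w : 'I_r -> R) :
  affine_fun q -> \sum_l w l = 1 -> q (\sum_l w l *: pts l) = \sum_l w l * q (pts l).
Proof.
case=> c [d Hq] Hw; rewrite Hq lin_sum.
have -> : d = \sum_l w l * d by rewrite -mulr_suml Hw mul1r.
by rewrite -big_split; apply: eq_bigr => l _; rewrite Hq linZ mulrDr.
Qed.

Lemma affine_fun_line n (q : 'cV[R]_n -> R) u v s : affine_fun q ->
  q ((1 - s) *: u + s *: v) = (1 - s) * q u + s * q v.
Proof.
case=> c [d Hq]; rewrite !Hq linD !linZ.
by rewrite !mulrDr !mulrBl !mul1r addrACA -!addrA [d + _]addrC !addrA subrK.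
Qed.

Lemma affine_fun_hull_const n (q : 'cV[R]_n -> R) (S : set 'cV[R]_n) b :
  affine_fun q -> (forall x, S x -> q x = b) -> forall y, affine_hull S y -> q y = b.
Proof.
move=> aq Sb y [r [pts [w [Sp [Hw ->]]]]].
rewrite affine_fun_comb // (eq_bigr (fun l => w l * b)) => [|l _]; last by rewrite Sb.
by rewrite -mulr_suml Hw mul1r.
Qed.

Lemma mapp_comb (X Y : obj R) (f : mor R X Y) r (pts : 'I_r -> _) (w : 'I_r -> R) :
  \sum_l w l = 1 -> mapp f (\sum_l w l *: pts l) = \sum_l w l *: mapp f (pts l).
Proof.
move=> Hw; rewrite {1}/mapp mulmx_sumr.
have {1}-> : mb f = \sum_l w l *: mb f by rewrite -scaler_suml Hw scale1r.
rewrite -big_split /=; apply: eq_bigr => l _.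
by rewrite /mapp scalerDr scalemxAr.
Qed.

Lemma affine_hull_mapp (X Y : obj R) (f : mor R X Y) (S : set 'cV[R]_(odim X))
    (T : set 'cV[R]_(odim Y)) y :
  (forall x, S x -> T (mapp f x)) -> affine_hull S y -> affine_hull T (mapp f y).
Proof.
move=> ST [r [pts [w [Sp [Hw ->]]]]].
exists r, (fun l => mapp f (pts l)), w; split; first by move=> l; apply: ST.
by split=> //; apply: mapp_comb.
Qed.

End AffineGeometry.

Section Semilinear.
Variable R : realType.

Lemma semilinear0 n : semilinear (set0 : set 'cV[R]_n).
Proof.
have -> : set0 = [set x : 'cV[R]_n | 0 < lin 0 x + 0].
  by apply/seteqP; split=> x /=; rewrite lin0 addr0 ltxx.
exact: sl_half.
Qed.

Lemma semilinear_preimage n m (M : 'M[R]_(n, m)) (b : 'cV[R]_n) (S : set 'cV[R]_n) :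
  semilinear S -> semilinear [set x : 'cV[R]_m | S (M *m x + b)].
Proof.
elim=> [a c | A _ IH | A B _ IHA _ IHB].
- have -> : [set x : 'cV[R]_m | 0 < lin a (M *m x + b) + c]
            = [set x | 0 < lin (M^T *m a) x + (lin a b + c)].
    by apply/seteqP; split=> x /=; rewrite linD lin_mulmx addrA.
  exact: sl_half.
- exact: sl_compl IH.
- exact: sl_union IHA IHB.
Qed.

Lemma semilinear_has_neq n (p : 'cV[R]_n) (s : seq 'I_n) :
  semilinear [set x : 'cV[R]_n | has (fun i => x i 0 != p i 0) s].
Proof.
elim: s => [|i s IH].
  rewrite (_ : [set x | _] = set0); first exact: semilinear0.
  by apply/seteqP; split=> x.
have -> : [set x : 'cV[R]_n | has (fun i => x i 0 != p i 0) (i :: s)] =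
  ([set x | 0 < lin (delta_mx i 0) x + (- p i 0)] `|`
   [set x | 0 < lin (- delta_mx i 0) x + p i 0]) `|`
  [set x : 'cV[R]_n | has (fun i => x i 0 != p i 0) s].
  apply/seteqP; split=> x /=; rewrite linNl !lin_delta subr_gt0 addrC subr_gt0.
    case/orP => [|->]; last by right.
    by rewrite neq_lt => /orP [] h; left; [right|left].
  case=> [[] h|->]; last by rewrite orbT.
    by rewrite gt_eqF.
  by rewrite lt_eqF.
by apply: sl_union => //; apply: sl_union; apply: sl_half.
Qed.

Lemma semilinear1 n (p : 'cV[R]_n) : semilinear [set p].
Proof.
have -> : [set p] =
    ~` [set x : 'cV[R]_n | has (fun i => x i 0 != p i 0) (enum 'I_n)].
  apply/seteqP; split=> x /=.
    by move=> -> /hasP [i _]; rewrite eqxx.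
  move=> H; apply/matrixP => i j; rewrite (ord1 j); apply/eqP.
  by apply: contra_notT H => Hn; apply/hasP; exists i => //; rewrite mem_enum.
by apply: sl_compl; apply: semilinear_has_neq.
Qed.

End Semilinear.

Lemma rank_col_mx_rV (F : fieldType) m n (v : 'rV[F]_n) (X : 'M[F]_(m, n)) (a : 'cV[F]_n) :
  X *m a = 0 -> v *m a != 0 -> \rank (col_mx v X) = (\rank X).+1.
Proof.
move=> Xa va.
have va0 : (v *m a) 0 0 != 0.
  by apply: contraNneq va => h; apply/eqP/matrixP => i j; rewrite !ord1 h mxE.
have vX0 : (v :&: X)%MS = 0.
  have /submxP [D HD] : ((v :&: X)%MS <= v)%MS := capmxSl _ _.
  have /submxP [D' HD'] : ((v :&: X)%MS <= X)%MS := capmxSr _ _.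
  have : (v :&: X)%MS *m a = 0 by rewrite {1}HD' -mulmxA Xa mulmx0.
  rewrite {1}HD -mulmxA [v *m a]mx11_scalar mul_mx_scalar => /eqP.
  rewrite scaler_eq0 (negbTE va0) => /eqP D0.
  by rewrite HD D0 mul0mx.
have v0 : v != 0 by apply: contraNneq va => ->; rewrite mul0mx.
by rewrite -addsmxE mxrank_disjoint_sum // rank_rV v0.
Qed.

Section Dimension.
Variables (R : realType) (n : nat).
Implicit Types S T : set 'cV[R]_n.

Lemma aff_dim_geS S T k : S `<=` T -> aff_dim_ge S k -> aff_dim_ge T k.
Proof.
move=> ST [x0 [X [Sx0 [SX rX]]]]; exists x0, X; split; first exact: ST.
by split=> // i; apply: ST.
Qed.

Lemma aff_dim_ge_pos S k : aff_dim_ge S k.+1 -> aff_dim_ge S 1.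
Proof.
case=> x0 [X [Sx0 [SX rX]]].
have [i Hi] : exists i, row i X != 0.
  apply/existsP; apply: contraT; rewrite negb_exists => /forallP H.
  suff X0 : X = 0 by move: rX; rewrite X0 mxrank0.
  by apply/row_matrixP => i; rewrite row0; apply/eqP; rewrite -[_ == _]negbK H.
exists x0, (row i X); split=> //; split; last by rewrite rank_rV Hi.
move=> j; rewrite (_ : row j (row i X) = row i X) //.
by apply/matrixP => r c; rewrite (ord1 r) (ord1 j) !mxE.
Qed.

Lemma aff_dim_ge_off_hyperplane S T (a : 'cV[R]_n) b z k :
  (forall x, S x -> lin a x = b) -> S `<=` T -> T z -> lin a z != b ->
  aff_dim_ge S k -> aff_dim_ge T k.+1.
Proof.
move=> Sa ST Tz az [x0 [X [Sx0 [SX rX]]]].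
have Xa : X *m a = 0.
  apply/row_matrixP => i; rewrite row_mul row0; apply/matrixP => r c.
  rewrite !ord1 [RHS]mxE -lin_trmx.
  by have := Sa _ (SX i); rewrite linD (Sa _ Sx0) => /(canRL (addKr b)); rewrite addNr.
set v := (z - x0)^T.
have va : v *m a != 0.
  apply: contraNneq az => va0; have := congr1 (fun M : 'M_1 => M 0 0) va0.
  by rewrite /= -lin_trmx trmxK linB (Sa _ Sx0) mxE => /eqP; rewrite subr_eq0.
exists x0, (col_mx v X : 'M_(1 + k, n)); split; first exact: ST.
split; last by rewrite (rank_col_mx_rV Xa va) rX.
move=> i; pose i' : 'I_(1 + k) := i; rewrite (_ : i = i') // -(splitK i').
case: (split i') => j /=.
  rewrite (rowKu j v X) (_ : row j v = v) ?trmxK ?subrKC //.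
  by apply/matrixP => r c; rewrite !ord1 mxE.
by rewrite (rowKd j v X); apply: ST.
Qed.

Lemma facet_dims (A F : set 'cV[R]_n) : facet A F ->
  (F = set0 /\ ~ aff_dim_ge A 1) \/
  (exists k, [/\ aff_dim_ge A k.+1, ~ aff_dim_ge A k.+2, aff_dim_ge F k & ~ aff_dim_ge F k.+1]).
Proof.
case=> _ [d [[[_ ->]|[k [-> [Ak Ak1]]]] [[F0 d2]|[k' [dk' [Fk Fk1]]]]]].
- by exfalso; move: d2; lia.
- by exfalso; move: dk'; lia.
- have k0 : k = 0%N by move: d2; lia.
  by left; split=> //; move: Ak1; rewrite k0.
- have kk : k = k'.+1 by move: dk'; lia.
  by right; exists k'; subst k; split.
Qed.

End Dimension.

Section FacetsOfPolyhedra.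
Variables (R : realType) (n : nat).
Implicit Types (S F : set 'cV[R]_n) (Q : nat -> 'cV[R]_n -> R).

Definition hrep S m Q : Prop :=
  (forall a, affine_fun (Q a)) /\
  S = [set y | affine_hull S y /\ forall a, (a < m)%N -> 0 <= Q a y].

Lemma sum_uniform m : \sum_(l < m.+1) (m.+1%:R : R)^-1 = 1.
Proof. by rewrite sumr_const card_ord -(mulr_natr (m.+1%:R)^-1) mulVf // pnatr_eq0. Qed.

(* Average one witness of [0 < Q a] for each [a]. *)
Lemma exists_relint_point S m Q s0 :
  (forall a, affine_fun (Q a)) -> S s0 ->
  (forall a x, (a < m)%N -> S x -> 0 <= Q a x) ->
  exists2 p, affine_hull S p &
    forall a, (a < m)%N -> 0 < Q a p \/ (Q a p = 0 /\ forall x, S x -> Q a x = 0).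
Proof.
move=> hQ Ss0 QS.
pose g a := if pselect (exists2 x, S x & 0 < Q a x) is left ex
            then projT1 (cid2 ex) else s0.
have gP a : S (g a) /\ ((exists2 x, S x & 0 < Q a x) -> 0 < Q a (g a)).
  by rewrite /g; case: pselect => [ex|//]; case: (cid2 ex).
pose p := \sum_(l < m.+1) (m.+1%:R)^-1 *: g l.
have Qp a : Q a p = \sum_(l < m.+1) (m.+1%:R)^-1 * Q a (g l).
  by rewrite affine_fun_comb // sum_uniform.
have Sp : affine_hull S p.
  by apply: affine_hull_comb; [move=> l; apply: (gP l).1 | apply: sum_uniform].
exists p => // a am.
have [ex|nex] := pselect (exists2 x, S x & 0 < Q a x).
  left; rewrite Qp (bigD1 (@Ordinal m.+1 a (ltnW am))) //= ltr_pwDl //.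
    by rewrite mulr_gt0 ?invr_gt0 ?ltr0n //; apply: (gP a).2.
  by apply: sumr_ge0 => l _; rewrite mulr_ge0 ?invr_ge0 ?QS //; apply: (gP l).1.
have S0 x : S x -> Q a x = 0.
  move=> Sx; apply/eqP; rewrite eq_le QS // andbT leNgt; apply/negP => Qx.
  by apply: nex; exists x.
by right; split=> //; apply: (affine_fun_hull_const (hQ a) S0).
Qed.

Lemma exists_extrapolation m Q p z :
  (forall a, affine_fun (Q a)) ->
  (forall a, (a < m)%N -> 0 < Q a p \/ (Q a p = 0 /\ Q a z = 0)) ->
  exists2 s, s < 0 & forall a, (a < m)%N -> 0 <= Q a ((1 - s) *: p + s *: z).
Proof.
move=> hQ Qpz.
have Qp0 a : (a < m)%N -> 0 <= Q a p by move=> am; case: (Qpz a am) => [/ltW|[->]].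
pose K := \sum_(a < m) `|Q a z| / Q a p.
have K0 : 0 <= K by apply: sumr_ge0 => a _; rewrite divr_ge0 ?Qp0.
exists (- (K + 1)^-1); first by rewrite oppr_lt0 invr_gt0 ltr_wpDl.
move=> a am; rewrite affine_fun_line // opprK.
case: (Qpz a am) => [Qp|[-> ->]]; last by rewrite !mulr0 addr0.
set t := (K + 1)^-1.
have t0 : 0 < t by rewrite invr_gt0 ltr_wpDl.
have tQz : t * `|Q a z| <= Q a p.
  have le_K : `|Q a z| / Q a p <= K.
    rewrite /K (bigD1 (Ordinal am)) //= lerDl.
    by apply: sumr_ge0 => j _; rewrite divr_ge0 ?Qp0.
  rewrite /t mulrC ler_pdivrMr ?ltr_wpDl //.
  rewrite ler_pdivrMr // in le_K; apply: (le_trans le_K).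
  by rewrite mulrC ler_wpM2l ?(ltW Qp) // lerDl.
have : t * Q a z <= t * `|Q a z| by rewrite ler_wpM2l ?(ltW t0) // real_ler_norm ?num_real.
have : 0 <= t * Q a p by rewrite mulr_ge0 ?(ltW t0) ?(ltW Qp).
rewrite mulrDl mul1r mulNr; lra.
Qed.

Section Facets.
Variables (S : set 'cV[R]_n) (m : nat) (Q : nat -> 'cV[R]_n -> R).
Hypothesis hS : hrep S m Q.

Lemma hrep_mem y : affine_hull S y -> (forall a, (a < m)%N -> 0 <= Q a y) -> S y.
Proof. by case: hS => _ defS Sy Qy; rewrite defS. Qed.

Lemma hrep_ge0 a y : (a < m)%N -> S y -> 0 <= Q a y.
Proof. by case: hS => _ defS am; rewrite {1}defS => -[_]; apply. Qed.

(* Otherwise a relative interior point of [F] could be pushed out of [F]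
   inside [S], past the supporting hyperplane. *)
Lemma facet_ineq_tight F a b k :
  (forall x, S x -> lin a x <= b) -> F = S `&` [set x | lin a x = b] ->
  aff_dim_ge S k.+1 -> aff_dim_ge F k -> ~ aff_dim_ge F k.+1 ->
  exists i, [/\ (i < m)%N, forall f, F f -> Q i f = 0 & exists2 x, S x & Q i x != 0].
Proof.
move=> valid defF Sk Fk Fk1; have [hQ _] := hS.
have FS : F `<=` S by rewrite defF => x [].
have Fab x : F x -> lin a x = b by rewrite defF => -[].
have [z Sz azb] : exists2 z, S z & lin a z < b.
  apply: contrapT => noz; apply: Fk1; apply: aff_dim_geS Sk => x Sx.
  rewrite defF; split=> //; apply/eqP; rewrite eq_le valid //= leNgt.
  by apply/negP => ?; apply: noz; exists x.
have [f0 [_ [Ff0 _]]] := Fk.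
apply: contrapT => noi.
have vanish i : (i < m)%N -> (forall f, F f -> Q i f = 0) -> forall x, S x -> Q i x = 0.
  move=> im Fi x Sx; have [//|Qx] := eqVneq (Q i x) 0.
  by exfalso; apply: noi; exists i; split=> //; exists x.
have [p Fp Qp] := exists_relint_point hQ Ff0 (fun i x im Fx => hrep_ge0 im (FS x Fx)).
have Sp : S p.
  apply: hrep_mem => [|i im]; first exact: affine_hullS Fp.
  by case: (Qp i im) => [/ltW|[->]].
have [s s0 Qy] : exists2 s, s < 0 & forall i, (i < m)%N -> 0 <= Q i ((1 - s) *: p + s *: z).
  apply: exists_extrapolation => // i im.
  case: (Qp i im) => [|[Qpi Fi]]; [by left | right; split=> //].
  exact: vanish.
have ap : lin a p = b.
  by apply: (affine_fun_hull_const _ Fab) => //; exists a, 0 => y; rewrite addr0.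
have := valid _ (hrep_mem (affine_hull_line s Sp Sz) Qy).
have : 0 < s * (lin a z - b) by rewrite nmulr_rgt0 // subr_lt0.
rewrite linD !linZ ap mulrBr mulrBl mul1r; lra.
Qed.

Lemma facet_cut_by_ineq F : facet S F -> aff_dim_ge S 1 ->
  exists i, [/\ (i < m)%N, F = [set x | S x /\ Q i x = 0] & exists2 x, S x & Q i x != 0].
Proof.
move=> fF S1; have [[F0 nS1]|[k [Sk Sk2 Fk Fk1]]] := facet_dims fF; first by [].
case: fF => [[a [b [valid defF]]] _].
have [i [im Fi [x' Sx' Qx']]] := facet_ineq_tight valid defF Sk Fk Fk1.
have FS : F `<=` S by rewrite defF => y [].
have FG : F `<=` [set y | S y /\ Q i y = 0] by move=> y Fy; split; [apply: FS | apply: Fi].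
exists i; split=> //; last by exists x'.
apply/seteqP; split=> // x [Sx Qx]; apply: contrapT => nFx.
have ax : lin a x != b by apply/eqP => ax; apply: nFx; rewrite defF.
have Fab y : F y -> lin a y = b by rewrite defF => -[].
have Gk1 := aff_dim_ge_off_hyperplane Fab FG (conj Sx Qx) ax Fk.
have [c [d Qcd]] := hS.1 i.
apply: Sk2; apply: (aff_dim_ge_off_hyperplane (a := c) (b := - d) _ _ Sx' _ Gk1).
- by move=> y [_ Qy]; move: Qy; rewrite Qcd => /eqP; rewrite addr_eq0 => /eqP.
- by move=> y [].
- by move: Qx'; rewrite Qcd addr_eq0.
Qed.

Lemma size_facets_le (P : pred nat) (Fs : seq (set 'cV[R]_n)) :
  (forall a, (a < m)%N -> ~~ P a -> forall y, Q a y = 0) ->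
  (forall i j, (i < j)%N -> (j < size Fs)%N -> nth set0 Fs i <> nth set0 Fs j) ->
  (forall l, (l < size Fs)%N -> facet S (nth set0 Fs l)) ->
  (size Fs <= maxn 1 (count P (iota 0 m)))%N.
Proof.
move=> QP dist fac; have nth_inj := distinct_nth_inj dist.
have [S1|nS1] := pselect (aff_dim_ge S 1); last first.
  have F0 l : (l < size Fs)%N -> nth set0 Fs l = set0.
    move=> hl; case: (facet_dims (fac l hl)) => [[//]|[k [Sk _]]].
    by case: nS1; apply: aff_dim_ge_pos Sk.
  rewrite leq_max; apply/orP; left; rewrite leqNgt; apply/negP => Fs2.
  by have := nth_inj 0%N 1%N (ltnW Fs2) Fs2; rewrite !F0 ?(ltnW Fs2) // => /(_ erefl).
have /choice [phi phiP] : forall l, exists i, (l < size Fs)%N ->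
    [/\ (i < m)%N, P i & nth set0 Fs l = [set x | S x /\ Q i x = 0]].
  move=> l; have [hl|_] := ltnP l (size Fs); last by exists 0%N.
  have [i [im -> [x Sx Qx]]] := facet_cut_by_ineq (fac l hl) S1.
  exists i => _; split=> //; apply: contraT => nP.
  by rewrite (QP i im nP) eqxx in Qx.
rewrite leq_max; apply/orP; right.
rewrite -size_filter -(size_iota 0 (size Fs)) -(size_map phi).
apply: uniq_leq_size.
  rewrite map_inj_in_uniq ?iota_uniq // => l1 l2; rewrite !mem_iota !add0n => h1 h2 e.
  apply: nth_inj => //.
  by have [_ _ ->] := phiP _ h1; have [_ _ ->] := phiP _ h2; rewrite e.
move=> x /mapP [l]; rewrite mem_iota add0n => hl ->.
by have [im Pl _] := phiP _ hl; rewrite mem_filter Pl mem_iota.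
Qed.

End Facets.
End FacetsOfPolyhedra.

Lemma hrep_iso (R : realType) (X Y : obj R) (f : mor R X Y) (g : mor R Y X) m Q :
  (forall y, oset Y y -> mapp f (mapp g y) = y) ->
  hrep (oset X) m Q -> hrep (oset Y) m (fun a y => Q a (mapp g y)).
Proof.
move=> fg [hQ defX]; split=> [a|]; first exact: affine_fun_mapp.
apply/seteqP; split=> y.
  move=> Yy; split=> [|a am]; first exact: subset_affine_hull.
  by have := @mmaps R _ _ g _ Yy; rewrite {1}defX => -[_]; apply.
case=> hy Qy; have Xgy : oset X (mapp g y).
  by rewrite defX; split=> //; apply: affine_hull_mapp hy => x; apply: mmaps.
have <- : mapp f (mapp g y) = y.
  by case: hy => r [pts [w [Yp [Hw ->]]]]; rewrite !mapp_comb //; apply: eq_bigr => l _; rewrite fg.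
exact: mmaps.
Qed.

Section ConstantMorphisms.
Variable R : realType.

Lemma const_maps (X Y : obj R) y : oset Y y -> forall x, oset X x -> oset Y (0 *m x + y).
Proof. by move=> Yy x _; rewrite mul0mx add0r. Qed.

Definition const_mor (X Y : obj R) y (Yy : oset Y y) : mor R X Y :=
  @Mor R X Y 0 y (@const_maps X Y y Yy).

Lemma mapp_const_mor (X Y : obj R) y (Yy : oset Y y) x : mapp (const_mor X Yy) x = y.
Proof. by rewrite /mapp /= mul0mx add0r. Qed.

Lemma obj0_setT : oset (obj0 R) = setT.
Proof. by apply/seteqP; split=> x //= _; rewrite lin0 addr0 ltxx. Qed.

End ConstantMorphisms.

Lemma col_sum_delta (R : pzSemiRingType) r (w : 'I_r -> R) :
  \col_l w l = \sum_l w l *: delta_mx l 0.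
Proof. by rewrite {1}[\col_l w l]matrix_sum_delta; apply: eq_bigr => l _; rewrite big_ord1 mxE. Qed.

Lemma mul_mx_delta_col (R : pzSemiRingType) n r (pts : 'I_r -> 'cV[R]_n) l :
  (\matrix_(i, l) pts l i 0) *m delta_mx l 0 = pts l.
Proof. by rewrite -colE; apply/matrixP => i j; rewrite (ord1 j) !mxE. Qed.

Section LimitCone.
Variables (R : realType) (V : seq (obj R)).
Variable E : forall i j : nat, seq (mor R (vtx V i) (vtx V j)).
Variables (k : nat) (J : pred nat).
Hypothesis size_E : forall j, size (E k j) = J j.
Hypothesis cone_lim : is_limit_cone V E J k.

Local Notation D i := (oset (vtx V i)).

Definition leg_mx j : 'M[R]_(odim (vtx V j), odim (vtx V k)) :=
  if E k j is e :: _ then mM e else 0.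
Definition leg_vec j : 'cV[R]_(odim (vtx V j)) :=
  if E k j is e :: _ then mb e else 0.
Definition leg j (y : 'cV[R]_(odim (vtx V k))) := leg_mx j *m y + leg_vec j.

Lemma mapp_leg j p y : List.In p (E k j) -> mapp p y = leg j y.
Proof.
have : (size (E k j) <= 1)%N by rewrite size_E; case: (J j).
rewrite /leg /leg_mx /leg_vec.
by case: (E k j) => [|e [|e' r]] //= _ [<-|[]].
Qed.

Lemma leg_edge j : J j -> exists p, List.In p (E k j).
Proof.
by move=> Jj; move: (size_E j); rewrite Jj; case: (E k j) => [|e r] //= _; exists e; left.
Qed.

Lemma leg_maps j y : J j -> D k y -> D j (leg j y).
Proof. by move=> /leg_edge [p Ep] Dy; rewrite -(mapp_leg y Ep); apply: mmaps. Qed.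

Lemma leg_hull j y : J j -> affine_hull (D k) y -> affine_hull (D j) (leg j y).
Proof.
move=> /leg_edge [p Ep]; rewrite -(mapp_leg y Ep).
by apply: affine_hull_mapp => x; apply: mmaps.
Qed.

Lemma affine_fun_coord_leg j (c : nat) : affine_fun (fun y => coord (leg j y) c).
Proof.
have [cc Hc] := coord_lin R (odim (vtx V j)) c.
by exists ((leg_mx j)^T *m cc), (lin cc (leg_vec j)) => y; rewrite Hc linD lin_mulmx.
Qed.

Lemma leg_compat y w1 w2 e : affine_hull (D k) y -> J w1 -> J w2 ->
  List.In e (E w1 w2) -> mapp e (leg w1 y) = leg w2 y.
Proof.
move=> [r [pts [w [Dp [Hw ->]]]]] J1 J2 Ee.
have [[p1 Ep1] [p2 Ep2]] := (leg_edge J1, leg_edge J2).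
rewrite -(mapp_leg _ Ep1) -(mapp_leg _ Ep2) !mapp_comb //.
apply: eq_bigr => l _; congr (_ *: _).
by case: cone_lim => H _; apply: H J1 J2 _ _ _ Ee Ep1 Ep2 _ (Dp l).
Qed.

Lemma leg_inj y1 y2 : D k y1 -> D k y2 -> (forall j, J j -> leg j y1 = leg j y2) -> y1 = y2.
Proof.
move=> D1 D2 leg12; have pt0 : oset (obj0 R) 0 by rewrite obj0_setT.
pose g j (Jj : J j) := const_mor (obj0 R) (leg_maps Jj D1).
have [|u [_ u_uniq]] := cone_lim.2 (obj0 R) g.
  move=> a b Ja Jb e Ee x _; rewrite !mapp_const_mor.
  exact: leg_compat (subset_affine_hull D1) Ja Jb Ee.
have u_const y (Dy : D k y) : (forall j, J j -> leg j y = leg j y1) ->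
    mapp u 0 = mapp (const_mor (obj0 R) Dy) 0.
  move=> legy; apply: u_uniq pt0 => j Jj p Ep x _.
  by rewrite !mapp_const_mor (mapp_leg _ Ep) legy.
have := u_const _ D2 (fun j Jj => esym (leg12 j Jj)).
by rewrite (u_const _ D1) // !mapp_const_mor.
Qed.

(* Test the limit property on [X = Z^-1(D k) \cup {lam}], on which [Z] is an
   affine map sending the unit vectors into [D k] and [lam] to [y]. *)
Lemma hull_mem_of_legs y : affine_hull (D k) y -> (forall j, J j -> D j (leg j y)) -> D k y.
Proof.
case=> r [pts [w [Dpts [Hw ey]]]] Dleg.
pose Z := \matrix_(i, l) pts l i 0; pose lam : 'cV[R]_r := \col_l w l.
have Zlam : Z *m lam = y.
  rewrite /lam col_sum_delta mulmx_sumr ey.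
  by apply: eq_bigr => l _; rewrite -scalemxAr mul_mx_delta_col.
pose X := Obj _ _ _ (sl_union _ _ _ _
  (semilinear_preimage Z 0 (osemilin _ (vtx V k))) (semilinear1 lam)).
have XZ mu : oset X mu -> affine_hull (D k) (Z *m mu).
  by case=> [/=|->]; [rewrite addr0; apply: subset_affine_hull | rewrite Zlam; exists r, pts, w].
have gmaps j (Jj : J j) mu : oset X mu -> D j (leg_mx j *m Z *m mu + leg_vec j).
  rewrite -mulmxA -/(leg j _); case=> [/=|->]; last by rewrite Zlam; apply: Dleg.
  by rewrite addr0; apply: leg_maps.
pose g j (Jj : J j) := @Mor R X (vtx V j) (leg_mx j *m Z) (leg_vec j) (gmaps j Jj).
have gE j (Jj : J j) mu : mapp (g j Jj) mu = leg j (Z *m mu) by rewrite /mapp /leg /= mulmxA.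
have [|u [u_legs _]] := cone_lim.2 X g.
  by move=> a b Ja Jb e Ee mu Xmu; rewrite !gE; apply: leg_compat (XZ mu Xmu) Ja Jb Ee.
have u_delta l : mapp u (delta_mx l 0) = pts l.
  have Xl : oset X (delta_mx l 0) by left; rewrite /= addr0 mul_mx_delta_col.
  apply: leg_inj => [|//|j Jj]; first exact: mmaps.
  have [p Ep] := leg_edge Jj.
  by rewrite -(mapp_leg _ Ep) (u_legs j Jj p Ep _ Xl) gE mul_mx_delta_col.
have <- : mapp u lam = y.
  by rewrite /lam col_sum_delta mapp_comb // ey; apply: eq_bigr => l _; rewrite u_delta.
by apply: mmaps; right.
Qed.

End LimitCone.

Section LimitComputation.
Variables (R : realType) (C : limcomp R).
Local Notation V := (lc_V C).
Local Notation E := (lc_E C).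
Local Notation n0 := (lc_n0 C).
Local Notation J := (lc_J C).
Local Notation D i := (oset (vtx V i)).
Hypothesis basic_D0 : forall i j, (i < n0)%N -> (j < n0)%N ->
  forall e, List.In e (E i j) -> basic e.
Hypothesis connected_D0 : forall i, (i < n0)%N ->
  exists j, (j < n0)%N /\ (E i j <> [::] \/ E j i <> [::]).
Hypothesis limit_steps : forall t, (t < lc_steps C)%N ->
  (forall j, J t j -> (j < n0 + t)%N) /\ (forall j, size (E (n0 + t)%N j) = J t j) /\
  is_limit_cone V E (J t) (n0 + t)%N.
Hypothesis constructive : forall t t', (t < t')%N -> (t' < lc_steps C)%N ->
  J t' (n0 + t)%N -> forall j, J t j -> J t' j.

Definition ray_vertex a := (a < n0)%N /\ D a <> setT.

Definition cone_vertices kk w := w = kk \/ ((n0 <= kk)%N /\ J (kk - n0) w).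

Definition compatible (W : nat -> Prop) (x : forall w, 'cV[R]_(odim (vtx V w))) :=
  forall w1 w2, W w1 -> W w2 -> forall e, List.In e (E w1 w2) -> mapp e (x w1) = x w2.

Definition ray_hrep kk := exists Q : nat -> 'cV[R]_(odim (vtx V kk)) -> R,
  hrep (D kk) n0 Q /\
  forall a, (forall y, Q a y = 0) \/
    [/\ ray_vertex a, cone_vertices kk a &
        forall x, compatible (cone_vertices kk) x -> Q a (x kk) = coord (x a) 0].

Lemma basic_target_setT a j e : (a < n0)%N -> (j < n0)%N -> List.In e (E j a) -> D a = setT.
Proof.
move=> ha hj Ee; have := basic_D0 hj ha Ee.
by case=> [[_ [_ [_ [-> _]]]]|[_ [_ [_ [-> _]]]]|[_ [_ [_ [-> _]]]]|[_ [_ [_ ->]]]].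
Qed.

Lemma ray_vertexE a : ray_vertex a -> D a = [set x | 0 <= coord x 0].
Proof.
case=> ha nT; have [j [hj [|]]] := connected_D0 ha; last first.
  case Eja: (E j a) => [//|e r] _; case: nT.
  by apply: (@basic_target_setT _ _ e ha hj); rewrite Eja; left.
case Eaj: (E a j) => [//|e r] _.
have : basic e by apply: (basic_D0 ha hj); rewrite Eaj; left.
by case=> [[_ [Da _]]|[_ [Da _]]|[_ [-> _]]|[_ [Da _]]].
Qed.

Lemma ray_hrep_D0 kk : (kk < n0)%N -> ray_hrep kk.
Proof.
move=> hk.
exists (fun a y => if `[< a = kk /\ ray_vertex kk >] then coord y 0 else 0); split; last first.
  move=> a; case: (asboolP (a = kk /\ ray_vertex kk)) => [[-> rk]|_]; last by left.
  by right; split=> //; left.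
split=> [a|]; first by case: asboolP => _; [apply: affine_fun_coord | apply: affine_fun0].
apply/seteqP; split=> y.
  move=> Dy; split=> [|a _]; first exact: subset_affine_hull.
  by case: asboolP => [[_ rk]|//]; move: Dy; rewrite (ray_vertexE rk).
case=> _ Qy; have [DT|nT] := pselect (D kk = setT); first by rewrite DT.
have rk : ray_vertex kk by [].
by have := Qy kk hk; rewrite asboolT // (ray_vertexE rk).
Qed.

Lemma cone_vertices_sub t j : (t < lc_steps C)%N -> J t j ->
  forall w, cone_vertices j w -> J t w.
Proof.
move=> ht Jj w [->//|[hj Jw]]; have [Jlt _] := limit_steps ht; have jt := Jlt j Jj.
by apply: (constructive (t := j - n0) _ ht _ Jw); [lia | rewrite subnKC].
Qed.

Lemma ray_hrep_step t : (t < lc_steps C)%N ->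
  (forall j, (j < n0 + t)%N -> ray_hrep j) -> ray_hrep (n0 + t)%N.
Proof.
move=> ht IH; have [Jlt [size_E lim]] := limit_steps ht.
pose leg_t := leg (k := (n0 + t)%N) E.
exists (fun a y => if `[< ray_vertex a >] && J t a then coord (leg_t a y) 0 else 0).
split; last first.
  move=> a; case: (asboolP (ray_vertex a)) => ra /=; last by left.
  case Ja: (J t a); last by left.
  have ca : cone_vertices (n0 + t) a by right; rewrite leq_addr addKn.
  right; split=> // x cx; have [p Ep] := leg_edge size_E Ja.
  by rewrite /leg_t -(mapp_leg size_E _ Ep) (cx _ _ (or_introl erefl) ca p Ep).
split=> [a|]; first by case: (_ && _); [apply: affine_fun_coord_leg | apply: affine_fun0].
apply/seteqP; split=> y.
  move=> Dy; split=> [|a _]; first exact: subset_affine_hull.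
  case: ifP => // /andP [/asboolP ra Ja].
  by have := leg_maps size_E Ja Dy; rewrite (ray_vertexE ra).
case=> hy Qy; apply: (hull_mem_of_legs size_E lim hy) => j Jj.
have [Qj [[_ defDj] Qjs]] := IH j (Jlt j Jj).
rewrite defDj; split=> [|a ha]; first exact: leg_hull.
have [->//|[ra ca Qja]] := Qjs a.
rewrite (Qja (fun w => leg_t w y)).
  by have := Qy a ha; rewrite asboolT // (cone_vertices_sub ht Jj ca).
move=> w1 w2 c1 c2 e Ee.
by apply: (leg_compat size_E lim hy _ _ Ee); apply: (cone_vertices_sub ht Jj).
Qed.

Lemma ray_hrep_all kk : (kk < size V)%N -> ray_hrep kk.
Proof.
elim/ltn_ind: kk => kk IH hk; have [lt_kk|ge_kk] := ltnP kk n0; first exact: ray_hrep_D0.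
rewrite -(subnKC ge_kk); apply: ray_hrep_step => [|j hj]; first by rewrite /lc_steps; lia.
by apply: IH; lia.
Qed.

Lemma count_ray_vertices :
  (count (fun a => `[< ray_vertex a >]) (iota 0 n0)
     <= \sum_(i < n0) \sum_(j < n0) size (E i j))%N.
Proof.
rewrite -sum1_count big_mkcond /= -[n0 in iota 0 n0]subn0 big_mkord.
apply: leq_sum => i _; case: asboolP => // -[hi nT].
have [j [hj [|]]] := connected_D0 hi.
  by rewrite (bigD1 (Ordinal hj)) //=; case: (E i j) => [//|e r] _ /=; lia.
case Eji: (E j i) => [//|e r] _; case: nT.
by apply: (@basic_target_setT _ _ e hi hj); rewrite Eji; left.
Qed.

Lemma lc_cost_gt0 : (0 < size V)%N -> (n0 <= size V)%N -> (0 < lc_cost C)%N.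
Proof.
move=> hV hn; rewrite /lc_cost /lc_steps.
have [->|n0_gt0] := posnP n0; first by rewrite subn0 addn_gt0 hV.
have [j [hj [|]]] := connected_D0 n0_gt0.
  rewrite (bigD1 (Ordinal n0_gt0)) //= (bigD1 (Ordinal hj)) //=.
  by case: (E 0 j) => [//|e r] _ /=; lia.
rewrite (bigD1 (Ordinal hj)) //= (bigD1 (Ordinal n0_gt0)) //=.
by case: (E j 0) => [//|e r] _ /=; lia.
Qed.

End LimitComputation.

Local Close Scope classical_set_scope.
Local Close Scope ring_scope.

Theorem lemma6p13 (R : realType) (A : obj R) (c : nat) :
  lim_complexity_is A c ->
  forall Fs : seq (set 'cV[R]_(odim A)),
    (forall i j, i < j -> j < size Fs -> nth set0 Fs i <> nth set0 Fs j) ->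
    (forall F, List.In F Fs -> facet (oset A) F) ->
    size Fs <= c ^ 2.
Proof.
move=> [[C [HC [[i [hi [f [g [_ fg]]]]] <-]]] _] Fs dist facets.
have [n0_le [_ [_ [basicD0 [connD0 [steps constr]]]]]] := HC.
have [Q [hQ Qray]] := ray_hrep_all basicD0 connD0 steps constr hi.
have Q0 a : a < lc_n0 C -> ~~ `[< ray_vertex C a >] -> forall y, Q a (mapp g y) = 0%R.
  by move=> _ nra y; case: (Qray a) => [->//|[ra _ _]]; rewrite asboolT in nra.
have cost_gt0 := lc_cost_gt0 connD0 (leq_ltn_trans (leq0n i) hi) n0_le.
have rays_le : count (fun a => `[< ray_vertex C a >]) (iota 0 (lc_n0 C)) <= lc_cost C.
  exact: leq_trans (count_ray_vertices basicD0 connD0) (leq_addl _ _).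
apply: leq_trans (size_facets_le (hrep_iso fg hQ) Q0 dist _) _.
  by move=> l hl; apply/facets/In_nth.
by rewrite geq_max; apply/andP; split; nia.
Qed.
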